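(* Consider the Best-or-Worst secretary problem with $n$ candidates and unequal payoffs $0\le m<M$: selecting the overall worst candidate pays $m$, selecting the overall best candidate pays $M$, and any other outcome (including selecting nobody) pays $0$. Then there exist integers $0\le r(n)\le s(n)\le n$ such that the following strategy maximizes the expected payoff among all strategies: reject the first $r(n)$ interviewed candidates; for the interviews $k$ with $r(n)<k\le s(n)$, accept the first candidate which is better than all the preceding ones; after the $s(n)$-th interview, accept the first candidate which is either better than all the preceding ones or worse than all the preceding ones.
   Context: Setting (secretary-type problem): $n$ candidates have distinct qualities (a strict total order) and are interviewed one at a time in uniformly random order (all $n!$ orders equally likely). After the $k$-th interview, the interviewer knows only the relative ranks of the first $k$ candidates among themselves and must immediately and irrevocably either accept the $k$-th candidate (stopping the process) or reject it; rejected candidates cannot be recalled. A strategy is a rule making this decision at each step using only the relative ranks observed so far (it may accept nobody). *)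

From mathcomp Require Import all_boot all_order all_algebra all_fingroup.
Set Implicit Arguments. Unset Strict Implicit. Unset Printing Implicit Defensive.
Import Order.TTheory GRing.Theory Num.Theory.

(* The interview order is a permutation p : 'S_n; the candidate interviewed at
   step i+1 (0-based position i) has quality p i, where quality n.-1 is the
   overall best and quality 0 the overall worst. *)
Definition qualities n (p : 'S_n) : seq nat := [seq nat_of_ord (p j) | j <- enum 'I_n].

Definition relpat (s : seq nat) : seq nat := [seq count (fun y => y < x) s | x <- s].

(* A (deterministic) strategy: after the k-th interview it sees the relative
   rank pattern of the first k candidates (a seq of size k) and decides
   whether to accept the k-th candidate. *)
Definition strategy := seq nat -> bool.

(* 0-based index of the accepted candidate, or n if nobody is accepted. *)
Definition stop_index n (S : strategy) (p : 'S_n) : nat :=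
  find (fun i => S (relpat (take i.+1 (qualities p)))) (iota 0 n).

Local Open Scope ring_scope.

Definition payoff (R : numDomainType) (m M : R) n (S : strategy) (p : 'S_n) : R :=
  let i := stop_index S p in
  if (i < n)%N then
    let x := nth 0%N (qualities p) i in
    if x == n.-1 then M else if x == 0%N then m else 0
  else 0.

Definition expected_payoff (R : numFieldType) (m M : R) n (S : strategy) : R :=
  (\sum_(p : 'S_n) payoff m M S p) / (n`!)%:R.

Definition threshold_strategy (r s : nat) : strategy := fun pat =>
  let k := size pat in
  let x := last 0%N pat in
  ((r < k <= s)%N && (x == k.-1)) || ((s < k)%N && ((x == k.-1) || (x == 0%N))).

(* Encode an interview order by the rank of each candidate on arrival, i.e. the
   number of earlier candidates it beats.  This is a bijection onto the sequences
   whose k-th term lies in [0, k), so these ranks are independent and uniform,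
   and the relative-rank pattern seen so far is a function of the ranks seen so
   far.  A candidate accepted at step k is overall best (worst) iff it is
   relatively best (worst) and stays so through the later arrivals, which has
   probability k/n.  Backward induction therefore yields the optimal value W_k of
   continuing after step k as a function of k alone: every strategy earns at most
   W_0, and one choosing at each step the better of accepting and continuing
   earns exactly W_0.  As W_k decreases in k while M k/n and m k/n increase,
   accepting a relatively best candidate is optimal exactly after some step r,
   and accepting a relatively worst one exactly after some step s >= r since
   m < M.  The first candidate, both relatively best and worst, is worth
   (M + m)/n, between M/n and W_1, so it is accepted exactly when r = 0. *)

From mathcomp Require Import all_boot all_order all_algebra all_fingroup.
From mathcomp Require Import zify ring.
Import Order.TTheory GRing.Theory Num.Theory.
Set Implicit Arguments. Unset Strict Implicit. Unset Printing Implicit Defensive.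

(* [rank_codes k l]: all possible ranks on arrival of candidates k+1, ..., k+l;
   [pattern_of] recovers relative ranks from ranks on arrival, and
   [rank_after v t] is the rank of a candidate of rank v after the arrivals t. *)
Fixpoint rank_codes (k l : nat) : seq (seq nat) :=
  if l is l'.+1 then [seq c :: t | c <- iota 0 k.+1, t <- rank_codes k.+1 l']
  else [:: [::]].

Fixpoint rank_code_ok (k : nat) (t : seq nat) : bool :=
  if t is c :: t' then (c <= k) && rank_code_ok k.+1 t' else true.

Lemma rank_codesS k l :
  rank_codes k l.+1 = [seq c :: t | c <- iota 0 k.+1, t <- rank_codes k.+1 l].
Proof. by []. Qed.

Lemma mem_rank_codes l k t :
  (t \in rank_codes k l) = (size t == l) && rank_code_ok k t.
Proof.
elim: l k t => [|l IHl] k t; first by case: t.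
rewrite rank_codesS; apply/allpairsP/idP => [[[c t'] []]|].
  rewrite mem_iota IHl ltnS => /andP[_ ck] /andP[/eqP szt okt] ->.
  by rewrite /= szt ck okt eqxx.
case: t => [|c t] // /and3P[szt ck okt].
by exists (c, t); rewrite mem_iota IHl -eqSS szt ltnS ck.
Qed.

Lemma uniq_rank_codes k l : uniq (rank_codes k l).
Proof.
elim: l k => [|l IHl] k //; rewrite rank_codesS.
by apply: allpairs_uniq => [||[c t] [c' t'] _ _ [-> ->]]; rewrite ?iota_uniq.
Qed.

Lemma size_rank_codesS k l :
  size (rank_codes k l.+1) = k.+1 * size (rank_codes k.+1 l).
Proof. by rewrite rank_codesS size_allpairs size_iota. Qed.

Lemma size_rank_codes0 n : size (rank_codes 0 n) = n`!.
Proof.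
suff: forall k, size (rank_codes k n) * k`! = (k + n)`!.
  by move/(_ 0); rewrite muln1.
elim: n => [|n IHn] k; first by rewrite mul1n addn0.
by rewrite size_rank_codesS [k.+1 * _]mulnC -mulnA -factS IHn addSnnS.
Qed.

Definition insert_rank (pat : seq nat) (c : nat) : seq nat :=
  rcons [seq v + (c <= v) | v <- pat] c.

Definition pattern_of (cs : seq nat) : seq nat := foldl insert_rank [::] cs.

Definition rank_after (v : nat) (t : seq nat) : nat :=
  foldl (fun v c => v + (c <= v)) v t.

Lemma size_foldl_insert_rank pat cs :
  size (foldl insert_rank pat cs) = size pat + size cs.
Proof.
elim: cs pat => [|c cs IHcs] pat /=; first by rewrite addn0.
by rewrite IHcs size_rcons size_map addSnnS.
Qed.

Lemma pattern_of_rcons cs c : pattern_of (rcons cs c) = insert_rank (pattern_of cs) c.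
Proof. by rewrite /pattern_of foldl_rcons. Qed.

Lemma size_pattern_of cs : size (pattern_of cs) = size cs.
Proof. by rewrite size_foldl_insert_rank. Qed.

Lemma nth_foldl_insert_rank pat t j : j < size pat ->
  nth 0 (foldl insert_rank pat t) j = rank_after (nth 0 pat j) t.
Proof.
elim: t pat => [|c t IHt] pat ltj //=.
rewrite IHt; last by rewrite size_rcons size_map ltnW.
by rewrite nth_rcons size_map ltj (nth_map 0).
Qed.

Lemma nth_pattern_of_cat h c t :
  nth 0 (pattern_of (h ++ c :: t)) (size h) = rank_after c t.
Proof.
rewrite /pattern_of foldl_cat /= nth_foldl_insert_rank; last first.
  by rewrite size_rcons size_map size_foldl_insert_rank.
by rewrite nth_rcons size_map size_foldl_insert_rank ltnn eqxx.
Qed.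

Lemma count_ltn_split (s : seq nat) y x : y <= x ->
  count (fun z => z < x) s = count (fun z => z < y) s + count (fun z => y <= z < x) s.
Proof.
move=> le_yx; elim: s => [|z s IHs] //=; rewrite IHs.
case: (ltnP z y) => [lt_zy|_] /=; rewrite add0n; last exact: addnCA.
by rewrite (leq_trans lt_zy le_yx) addnA.
Qed.

Lemma relpat_rcons (s : seq nat) x : x \notin s ->
  relpat (rcons s x) = insert_rank (relpat s) (count (fun z => z < x) s).
Proof.
move=> xNs; rewrite /relpat /insert_rank map_rcons -map_comp; congr rcons; last first.
  by rewrite -cats1 count_cat /= ltnn !addn0.
apply/eq_in_map => y ys /=; rewrite -cats1 count_cat /= addn0; congr addn.
have [ltxy|ltyx|eqxy] := ltngtP x y.
- by rewrite (count_ltn_split s (ltnW ltxy)) leq_addr.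
- have has_y : has (fun z => y <= z < x) s by apply/hasP; exists y; rewrite ?leqnn.
  by rewrite leqNgt (count_ltn_split s (ltnW ltyx)) -addn1 leq_add2l -has_count has_y.
- by rewrite eqxy ys in xNs.
Qed.

Definition arrival_ranks (s : seq nat) : seq nat :=
  mkseq (fun i => count (fun z => z < nth 0 s i) (take i s)) (size s).

Lemma size_arrival_ranks s : size (arrival_ranks s) = size s.
Proof. exact: size_mkseq. Qed.

Lemma arrival_ranks_rcons s x :
  arrival_ranks (rcons s x) = rcons (arrival_ranks s) (count (fun z => z < x) s).
Proof.
rewrite /arrival_ranks size_rcons mkseqS nth_rcons ltnn eqxx -[rcons s x]cats1 take_size_cat //.
congr rcons; apply/eq_in_map => i; rewrite mem_iota => /andP[_ lti].
by rewrite nth_cat lti takel_cat // ltnW.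
Qed.

Lemma take_arrival_ranks i s : take i (arrival_ranks s) = arrival_ranks (take i s).
Proof.
rewrite /arrival_ranks /mkseq -map_take take_iota size_take_min.
apply/eq_in_map => j; rewrite mem_iota leq_min => /andP[_ /andP[ltji _]].
by rewrite nth_take // take_takel // ltnW.
Qed.

Lemma pattern_of_arrival_ranks s : uniq s -> pattern_of (arrival_ranks s) = relpat s.
Proof.
elim/last_ind: s => [|s x IHs] //; rewrite rcons_uniq => /andP[xNs uniq_s].
by rewrite arrival_ranks_rcons pattern_of_rcons IHs // relpat_rcons.
Qed.

Lemma rank_code_ok_rcons k t c :
  rank_code_ok k (rcons t c) = rank_code_ok k t && (c <= k + size t).
Proof.
elim: t k => [|c' t IHt] k /=; first by rewrite addn0 andbT.
by rewrite IHt addSnnS andbA.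
Qed.

Lemma rank_code_ok_arrival_ranks s : rank_code_ok 0 (arrival_ranks s).
Proof.
elim/last_ind: s => [|s x IHs] //.
by rewrite arrival_ranks_rcons rank_code_ok_rcons IHs size_arrival_ranks count_size.
Qed.

Section InterviewOrders.
Variable n : nat.

Lemma size_qualities (p : 'S_n) : size (qualities p) = n.
Proof. by rewrite size_map size_enum_ord. Qed.

Lemma uniq_qualities (p : 'S_n) : uniq (qualities p).
Proof. by rewrite map_inj_uniq ?enum_uniq // => i j /val_inj/perm_inj. Qed.

Lemma perm_qualities_iota (p : 'S_n) : perm_eq (qualities p) (iota 0 n).
Proof.
apply: uniq_perm; rewrite ?uniq_qualities ?iota_uniq // => x.
rewrite mem_iota add0n; apply/mapP/idP => [[j _ ->]|ltxn]; first exact: ltn_ord.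
by exists ((p^-1)%g (Ordinal ltxn)); rewrite ?mem_enum ?permKV.
Qed.

Lemma relpat_qualities (p : 'S_n) : relpat (qualities p) = qualities p.
Proof.
rewrite /relpat -[RHS]map_id; apply/eq_in_map => x.
rewrite (perm_mem (perm_qualities_iota p)) mem_iota => ltxn.
rewrite (seq.permP (perm_qualities_iota p)) -size_filter.
by rewrite (filter_iota_ltn 0 (ltnW ltxn)) size_iota.
Qed.

Definition code (p : 'S_n) : seq nat := arrival_ranks (qualities p).

Lemma pattern_of_code (p : 'S_n) : pattern_of (code p) = qualities p.
Proof. by rewrite pattern_of_arrival_ranks ?uniq_qualities // relpat_qualities. Qed.

Lemma code_inj : injective code.
Proof.
move=> p1 p2 /(congr1 pattern_of); rewrite !pattern_of_code => /eq_in_map eq_p.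
by apply/permP => i; apply/val_inj/eq_p; rewrite mem_enum.
Qed.

Lemma perm_code_rank_codes : perm_eq [seq code p | p <- enum 'S_n] (rank_codes 0 n).
Proof.
have uniq_codes : uniq [seq code p | p <- enum 'S_n].
  by rewrite map_inj_uniq ?enum_uniq //; exact: code_inj.
apply: uniq_perm; rewrite ?uniq_rank_codes //.
apply: (uniq_min_size uniq_codes _ _).2 => [_ /mapP[p _ ->]|].
  by rewrite mem_rank_codes size_arrival_ranks size_qualities eqxx rank_code_ok_arrival_ranks.
by rewrite size_rank_codes0 size_map -cardE card_Sn.
Qed.

Lemma stop_index_code (S : strategy) (p : 'S_n) :
  stop_index S p = find (fun i => S (pattern_of (take i.+1 (code p)))) (iota 0 n).
Proof.
apply: eq_in_find => i _.
by rewrite take_arrival_ranks pattern_of_arrival_ranks // take_uniq ?uniq_qualities.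
Qed.

End InterviewOrders.

Local Open Scope ring_scope.

Section Play.
Variables (R : numDomainType) (m M : R).

Definition bw_reward (N v : nat) : R :=
  if v == N.-1 then M else if v == 0%N then m else 0.

Fixpoint play (T : strategy) (h t : seq nat) : R :=
  if t is c :: t' then
    if T (rcons h c) then bw_reward ((size h).+1 + size t') (rank_after c t')
    else play T (rcons h c) t'
  else 0.

Lemma play_find T h t : play T h t =
  let i := find (fun j => T (take j.+1 (h ++ t))) (iota (size h) (size t)) in
  if (i < size t)%N then bw_reward (size (h ++ t)) (nth 0%N (pattern_of (h ++ t)) (size h + i))
  else 0.
Proof.
elim: t h => [|c t IHt] h //=.
have -> : take (size h).+1 (h ++ c :: t) = rcons h c.
  by rewrite -cat_rcons take_size_cat ?size_rcons.
case: (T (rcons h c)) => /=; first by rewrite addn0 nth_pattern_of_cat size_cat addSnnS.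
by rewrite IHt /= size_rcons cat_rcons ltnS addSnnS.
Qed.

Lemma payoff_play n (S : strategy) (p : 'S_n) :
  payoff m M S p = play (S \o pattern_of) [::] (code p).
Proof.
rewrite play_find /payoff stop_index_code /= size_arrival_ranks size_qualities.
by rewrite pattern_of_code.
Qed.

Lemma sum_payoff n (S : strategy) :
  \sum_(p : 'S_n) payoff m M S p = \sum_(t <- rank_codes 0 n) play (S \o pattern_of) [::] t.
Proof.
under eq_bigr do rewrite payoff_play.
by rewrite -(perm_big _ (perm_code_rank_codes n)) big_map big_enum.
Qed.

End Play.

Ltac natr_field :=
  field; repeat (rewrite -natrD || rewrite nat1r || rewrite natr1); rewrite pnatr_eq0; lia.

Section Value.
Variables (R : realFieldType) (m M : R).

(* Expected payoff of accepting, at step k with l steps left, a candidate of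
   relative rank x: relative best/worst remains best/worst with probability
   k/(k+l).  A lone candidate counts as best, as in [payoff]. *)
Definition accept_value (k x l : nat) : R :=
  if (k + l == 1)%N then M
  else ((if x == k.-1 then M else 0) + (if x == 0%N then m else 0)) * (k%:R / (k + l)%:R).

Lemma accept_value_rec k x l : (x <= k)%N ->
  x.+1%:R * accept_value k.+2 x.+1 l + (k.+1 - x)%:R * accept_value k.+2 x l
  = k.+2%:R * accept_value k.+1 x l.+1.
Proof.
move=> lexk; rewrite /accept_value !addSn addnS /= (@ltn_eqF x k.+1) //.
have [->|neq_xk] := eqVneq x k.
  by rewrite subSnn eqxx; case: k {lexk} => [|k] /=; natr_field.
rewrite eqSS (negbTE neq_xk).
have [->|_] := eqVneq x 0%N; first by rewrite subn0; natr_field.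
by rewrite !addr0 !mul0r !mulr0 addr0.
Qed.

Lemma sum_iota_leq (F : bool -> R) k x : (x <= k)%N ->
  \sum_(c <- iota 0 k.+1) F (c <= x)%N = x.+1%:R * F true + (k - x)%:R * F false.
Proof.
move=> lexk; rewrite -[k.+1](subnKC (_ : x.+1 <= k.+1)%N) // iotaD big_cat add0n.
rewrite (eq_big_seq (fun=> F true)) => [|c]; last by rewrite mem_iota ltnS => /andP[_ ->].
rewrite [X in _ + X = _](eq_big_seq (fun=> F false)) => [|c]; last first.
  by rewrite mem_iota => /andP[/ltn_geF->].
by rewrite !big_const_seq !count_predT !size_iota !iter_addr !addr0 subSS !mulr_natl.
Qed.

Lemma sum_rank_codesS k l (F : seq nat -> R) :
  \sum_(t <- rank_codes k l.+1) F t = \sum_(c <- iota 0 k.+1) \sum_(t <- rank_codes k.+1 l) F (c :: t).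
Proof. by rewrite rank_codesS big_allpairs_dep. Qed.

Lemma sum_bw_reward_rank_after k x l : (x < k)%N ->
  \sum_(t <- rank_codes k l) bw_reward m M (k + size t) (rank_after x t)
  = (size (rank_codes k l))%:R * accept_value k x l.
Proof.
elim: l k x => [|l IHl] [|k] x // ltxk.
  rewrite big_seq1 mul1r /bw_reward /accept_value !addn0 divff ?pnatr_eq0 // mulr1 /=.
  case: k ltxk => [|k]; first by case: x.
  move=> _; have [-> /=|_] := eqVneq x k.+1; first by rewrite addr0.
  by rewrite add0r.
have IH c : \sum_(t <- rank_codes k.+2 l)
    bw_reward m M (k.+2 + size t) (rank_after (x + (c <= x)) t)
  = (size (rank_codes k.+2 l))%:R * accept_value k.+2 (x + (c <= x)) l.
  by apply: IHl; case: (c <= x)%N; rewrite ?addn1 ?addn0 ltnS // ltnW.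
rewrite sum_rank_codesS.
under eq_bigr => c _ do under eq_bigr => t _ do rewrite /= addnS -addSn.
rewrite (eq_bigr _ (fun c _ => IH c)).
rewrite (sum_iota_leq (fun b => _ * accept_value k.+2 (x + b) l) (ltnW ltxk)) /=.
by rewrite addn1 addn0 size_rank_codesS natrM mulrAC -(@accept_value_rec k x l ltxk); ring.
Qed.

(* Optimal expected payoff after rejecting the k-th candidate, l steps left. *)
Fixpoint value (k l : nat) : R :=
  if l is l'.+1 then
    (\sum_(x <- iota 0 k.+1) Num.max (accept_value k.+1 x l') (value k.+1 l')) / k.+1%:R
  else 0.

Lemma valueS k l : value k l.+1 =
  (\sum_(x <- iota 0 k.+1) Num.max (accept_value k.+1 x l) (value k.+1 l)) / k.+1%:R.
Proof. by []. Qed.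

Lemma value_ge0 k l : 0 <= value k l.
Proof.
elim: l k => [|l IHl] k //=; rewrite divr_ge0 // sumr_ge0 // => x _.
by rewrite le_max IHl orbT.
Qed.

Lemma value_succ_le k l : value k.+1 l <= value k l.+1.
Proof.
rewrite valueS ler_pdivlMr ?ltr0Sn //.
have -> : value k.+1 l * k.+1%:R = \sum_(x <- iota 0 k.+1) value k.+1 l.
  by rewrite big_const_seq count_predT size_iota iter_addr addr0 mulr_natr.
by apply: ler_sum => x _; rewrite le_max lexx orbT.
Qed.

Lemma value_le_earlier n j k : (j <= k <= n)%N -> value k (n - k) <= value j (n - j).
Proof.
case/andP; elim: k => [|k IHk]; first by rewrite leqn0 => /eqP->.
rewrite leq_eqVlt => /predU1P[<- //|ltjk] ltkn.
by apply: le_trans (IHk ltjk (ltnW ltkn)); rewrite -(subnSK ltkn) value_succ_le.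
Qed.

Lemma size_value_rank_codesS k l :
  (size (rank_codes k l.+1))%:R * value k l.+1
  = \sum_(c <- iota 0 k.+1)
      (size (rank_codes k.+1 l))%:R * Num.max (accept_value k.+1 c l) (value k.+1 l).
Proof.
by rewrite size_rank_codesS natrM valueS -mulr_sumr; natr_field.
Qed.

Lemma sum_play_cons T h c l : (c <= size h)%N ->
  \sum_(t <- rank_codes (size h).+1 l) play m M T h (c :: t) =
  if T (rcons h c) then (size (rank_codes (size h).+1 l))%:R * accept_value (size h).+1 c l
  else \sum_(t <- rank_codes (size h).+1 l) play m M T (rcons h c) t.
Proof.
move=> lech; case: ifP => Tc; last by apply: eq_bigr => t _ /=; rewrite Tc.
by rewrite -sum_bw_reward_rank_after //; apply: eq_bigr => t _ /=; rewrite Tc.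
Qed.

Lemma sum_play_le T h l :
  \sum_(t <- rank_codes (size h) l) play m M T h t
  <= (size (rank_codes (size h) l))%:R * value (size h) l.
Proof.
elim: l h => [|l IHl] h; first by rewrite big_seq1 mulr0.
rewrite sum_rank_codesS size_value_rank_codesS big_seq [leRHS]big_seq.
apply: ler_sum => c; rewrite mem_iota ltnS => /andP[_ lech].
rewrite sum_play_cons //; case: (T _); first by rewrite ler_wpM2l ?le_max ?lexx.
have := IHl (rcons h c); rewrite size_rcons => /le_trans; apply.
by rewrite ler_wpM2l ?le_max ?lexx ?orbT.
Qed.

Lemma accept_value_gt1 k x l : (1 < k)%N ->
  accept_value k x l
  = ((if x == k.-1 then M else 0) + (if x == 0%N then m else 0)) * (k%:R / (k + l)%:R).
Proof. by case: k => [|[|k]] // _; rewrite /accept_value !addSn. Qed.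

Lemma accept_value_first_le l : accept_value 1 0 l.+1 <= value 1 l.+1.
Proof.
rewrite valueS /= !big_cons big_nil addr0.
apply: le_trans (_ : (accept_value 2 0 l + accept_value 2 1 l) / 2%:R <= _).
  by rewrite le_eqVlt /accept_value /=; apply/orP; left; apply/eqP; natr_field.
by rewrite ler_pM2r ?invr_gt0 ?ltr0Sn // lerD // le_max lexx.
Qed.

Definition stops_optimally n (T : strategy) : Prop :=
  forall h c, (size h < n)%N -> (c <= size h)%N ->
  let k := (size h).+1 in
  (if T (rcons h c) then accept_value k c (n - k) else value k (n - k))
  = Num.max (accept_value k c (n - k)) (value k (n - k)).

Lemma sum_play_optimal n T h l : stops_optimally n T -> (size h + l)%N = n ->
  \sum_(t <- rank_codes (size h) l) play m M T h t
  = (size (rank_codes (size h) l))%:R * value (size h) l.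
Proof.
move=> opt; elim: l h => [|l IHl] h szhl; first by rewrite big_seq1 mulr0.
rewrite sum_rank_codesS size_value_rank_codesS big_seq [RHS]big_seq.
apply: eq_bigr => c; rewrite mem_iota ltnS => /andP[_ lech].
have := opt h c _ lech; rewrite /= -szhl addnS ltnS leq_addr subSS addKn => /(_ isT).
rewrite sum_play_cons //; case: (T _) => <- //.
by have := IHl (rcons h c); rewrite size_rcons addSnnS => ->.
Qed.

End Value.

Section Thresholds.
Variables (R : realFieldType) (m M : R) (n : nat).

Definition threshold (c : R) : nat :=
  find (fun j => value m M j (n - j) <= c * (j%:R / n%:R)) (iota 1 n).

Lemma threshold_le c : (threshold c <= n)%N.
Proof. by rewrite /threshold -[leqRHS](size_iota 1) find_size. Qed.

Lemma threshold_anti c1 c2 : c1 <= c2 -> (threshold c2 <= threshold c1)%N.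
Proof.
move=> le_c12; apply: sub_find => j /= /le_trans; apply.
by rewrite ler_wpM2r ?divr_ge0.
Qed.

Lemma threshold_ltE c j : 0 <= c -> (0 < j <= n)%N ->
  (threshold c < j)%N = (value m M j (n - j) <= c * (j%:R / n%:R)).
Proof.
move=> c0 /andP[j0 lejn].
set P := fun j => value m M j (n - j) <= c * (j%:R / n%:R).
have P_mono i : (i <= j)%N -> P i -> P j.
  move=> leij Pi; apply: le_trans (value_le_earlier m M (_ : i <= j <= n)%N) _.
    by rewrite leij.
  by apply: le_trans Pi _; rewrite ler_wpM2l // ler_wpM2r ?invr_ge0 // ler_nat.
apply/idP/idP => [lt_thr_j|Pj].
  have hasP : has P (iota 1 n) by rewrite has_find size_iota (leq_trans lt_thr_j).
  by apply: P_mono (nth_find 0 hasP); rewrite nth_iota ?add1n // (leq_trans lt_thr_j).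
rewrite ltnNge; apply: contraL Pj => le_j_thr.
have lt_thr : (j.-1 < threshold c)%N by rewrite prednK.
have lt_n : (j.-1 < n)%N by rewrite prednK.
by have := before_find 0 lt_thr; rewrite nth_iota // add1n prednK // => ->.
Qed.

Hypotheses (m_ge0 : 0 <= m) (lt_mM : m < M).

Lemma threshold_strategy_optimal :
  stops_optimally m M n (threshold_strategy (threshold M) (threshold m) \o pattern_of).
Proof.
move=> h c lt_hn le_ch /=.
rewrite pattern_of_rcons /threshold_strategy /insert_rank size_rcons size_map size_pattern_of.
rewrite last_rcons; set j := (size h).+1.
have j_range : (0 < j <= n)%N by [].
have M_ge0 : 0 <= M by apply: le_trans m_ge0 (ltW lt_mM).
have le_rs : (threshold M <= threshold m)%N by apply/threshold_anti/ltW.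
have max_if (a b : R) : (if b <= a then a else b) = Num.max a b by rewrite maxC maxEle.
case: (ltngtP j 1) => [//|gt_j1|j1]; last first.
  have -> : c = 0%N by move: le_ch j1; rewrite /j; lia.
  rewrite j1 in j_range *; rewrite eqxx !andbT.
  have -> : ((threshold M < 1 <= threshold m) || (threshold m < 1))%N = (threshold M < 1)%N.
    by lia.
  rewrite threshold_ltE //.
  case: n lt_hn {j_range} => [//|[_|l _]].
    by rewrite /accept_value /= divr1 mulr1 M_ge0 max_l.
  rewrite subn1 /=; case: ifP => [le_vM|_]; last by rewrite max_r // accept_value_first_le.
  rewrite max_l // (le_trans le_vM) // /accept_value /= add1n.
  by rewrite ler_wpM2r ?divr_ge0 // lerDl.
rewrite accept_value_gt1 // subnKC //.
have [->|_] := eqVneq c j.-1.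
  have -> : (j.-1 == 0%N) = false by lia.
  rewrite andbT /= andbT addr0.
  have -> : ((threshold M < j <= threshold m) || (threshold m < j))%N = (threshold M < j)%N.
    by lia.
  by rewrite threshold_ltE // max_if.
have [_|_] := eqVneq c 0%N; last by rewrite !andbF add0r mul0r max_r ?value_ge0.
by rewrite andbF /= andbT add0r threshold_ltE // max_if.
Qed.

End Thresholds.

Theorem theorem5 (R : realFieldType) (n : nat) (m M : R) :
  0 <= m -> m < M ->
  exists r s : nat, (r <= s <= n)%N /\
    forall S : strategy,
      expected_payoff m M n S <= expected_payoff m M n (threshold_strategy r s).
Proof.
move=> m_ge0 lt_mM; exists (threshold m M n M), (threshold m M n m).
split; first by rewrite threshold_anti ?threshold_le ?ltW.
move=> S; rewrite /expected_payoff ler_wpM2r ?invr_ge0 // !sum_payoff.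
apply: le_trans (sum_play_le m M _ [::] n) _.
by rewrite (sum_play_optimal (h := [::]) (threshold_strategy_optimal m_ge0 lt_mM)) ?add0n.
Qed.
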